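(* Let $\pi_2=2\int_0^1\frac{\mathrm{d}t}{\sqrt{1-t^4}}$ and let $\mathrm{sleaf}_2:\mathbb{R}\to\mathbb{R}$ be the leaf function of basis $2$. Let $m$ be an integer, let $l$ be real with $s:=\mathrm{sleaf}_2(l)\neq0$. (i) If $\frac{\pi_2}{2}(4m+1)\le l\le\frac{\pi_2}{2}(4m+3)$, then $$\Bigl(\mathrm{sleaf}_2\Bigl(\frac l2\Bigr)\Bigr)^2=\frac{-1-\sqrt{1-s^2}}{s^2}+\frac{\sqrt{1+s^2}}{s^2}\sqrt{2-s^2+2\sqrt{1-s^2}}.$$ (ii) If $\frac{\pi_2}{2}(4m-1)\le l\le\frac{\pi_2}{2}(4m+1)$, then $$\Bigl(\mathrm{sleaf}_2\Bigl(\frac l2\Bigr)\Bigr)^2=\frac{-1+\sqrt{1-s^2}}{s^2}+\frac{\sqrt{1+s^2}}{s^2}\sqrt{2-s^2-2\sqrt{1-s^2}}.$$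
   Context: For a natural number $n$, the leaf function $\mathrm{sleaf}_n:\mathbb{R}\to\mathbb{R}$ is the solution of $\frac{\mathrm{d}^2r}{\mathrm{d}l^2}=-n\,r^{2n-1}$ with $r(0)=0$, $r'(0)=1$; it is periodic with period $2\pi_n$, where $\pi_n=2\int_0^1\frac{\mathrm{d}t}{\sqrt{1-t^{2n}}}$, and on $[-\pi_n/2,\pi_n/2]$ it is the inverse of $r\mapsto\int_0^r\frac{\mathrm{d}t}{\sqrt{1-t^{2n}}}$. *)

From Stdlib Require Import Reals.
From Coquelicot Require Import Coquelicot.
Open Scope R_scope.

(* pi_n = 2 * \int_0^1 dt / sqrt(1 - t^(2n)), an improper Riemann integral
   (the integrand is unbounded at t = 1), taken as the limit at 1^- . *)
Definition pi_n (n : nat) : R :=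
  2 * RInt_gen (fun t : R => / sqrt (1 - t ^ (2 * n))) (at_point 0) (at_left 1).

(* r is the leaf function sleaf_n: the solution of r'' = - n r^(2n-1),
   r(0) = 0, r'(0) = 1 (unique by Cauchy-Lipschitz). *)
Definition is_sleaf (n : nat) (r : R -> R) : Prop :=
  exists r' : R -> R,
    (forall x, is_derive r x (r' x)) /\
    (forall x, is_derive r' x (- INR n * r x ^ (2 * n - 1))) /\
    r 0 = 0 /\ r' 0 = 1.

(* Let p = r' for r = sleaf_2.  Then p^2 + r^4 = 1, and uniqueness for y'' = -a y^3 (a Gronwall
   estimate on the squared distance of two bounded solutions) yields the oddness of r, the
   symmetry of (r, p) about the first zero t0 of p, and the duplication formulas
   r(2x) = 2 r p / (1 + r^4),  p(2x) = (1 - 6 r^4 + r^8) / (1 + r^4)^2.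
   The substitution t = r(y) shows pi_2 = 2 t0, so p <= 0 on [(4m+1) t0, (4m+3) t0] and
   p >= 0 on [(4m-1) t0, (4m+1) t0].  With X = r(l/2)^2 the duplication formulas give
   s^2 = 4 X (1 - X^2) / (1 + X^2)^2 and p(l) (1 + X^2)^2 = (X^2 + 2X - 1) (X^2 - 2X - 1),
   whose second factor is negative on [0, 1]; so the sign of p(l) decides which root of
   s^2 (1 + X^2)^2 = 4 X (1 - X^2) is X, and solving that quartic gives the two formulas. *)

From Stdlib Require Import Reals Lra Psatz ZArith Classical.
From Coquelicot Require Import Coquelicot.
Open Scope R_scope.

Ltac auto_derive_from_hyps :=
  auto_derive;
  [ repeat split; try (eexists; solve [eauto])
  | repeat (erewrite is_derive_unique by eauto) ].

Lemma MVT_is_derive (f df : R -> R) (a b : R) :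
  a < b -> (forall x, a <= x <= b -> is_derive f x (df x)) ->
  exists c, a < c < b /\ f b - f a = df c * (b - a).
Proof.
  intros Hab Hf. destruct (MVT_cor2 f df a b Hab) as [c [Hc Hac]].
  - intros c Hc. apply is_derive_Reals, Hf, Hc.
  - now exists c.
Qed.

Lemma derive_nonneg_le (f df : R -> R) (a b : R) :
  a <= b -> (forall x, a <= x <= b -> is_derive f x (df x)) ->
  (forall x, a < x < b -> 0 <= df x) -> f a <= f b.
Proof.
  intros Hab Hf Hdf. destruct (Req_dec a b) as [<-|Hne]; [lra|].
  destruct (MVT_is_derive f df a b) as [c [Hc Hfc]]; [lra|exact Hf|].
  specialize (Hdf c Hc). nra.
Qed.

Lemma derive_pos_lt (f df : R -> R) (a b : R) :
  a < b -> (forall x, a <= x <= b -> is_derive f x (df x)) ->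
  (forall x, a < x < b -> 0 < df x) -> f a < f b.
Proof.
  intros Hab Hf Hdf.
  destruct (MVT_is_derive f df a b) as [c [Hc Hfc]]; [lra|exact Hf|].
  specialize (Hdf c Hc). nra.
Qed.

Lemma is_derive_continuity_pt (f : R -> R) (x l : R) : is_derive f x l -> continuity_pt f x.
Proof.
  intros Hf. apply continuity_pt_filterlim.
  apply (ex_derive_continuous (K := R_AbsRing) (V := R_NormedModule)). now exists l.
Qed.

Lemma continuity_pt_pos_near (f : R -> R) (x : R) :
  continuity_pt f x -> 0 < f x ->
  exists d, 0 < d /\ forall y, Rabs (y - x) < d -> 0 < f y.
Proof.
  intros Hf Hfx. destruct (Hf (f x / 2)) as [d [Hd Hnear]]; [lra|].
  exists d. split; [exact Hd|]. intros y Hy.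
  destruct (Req_dec y x) as [->|Hne]; [exact Hfx|].
  assert (Hclose : Rabs (f y - f x) < f x / 2) by (apply Hnear; repeat split; auto).
  apply Rabs_def2 in Hclose. lra.
Qed.

Definition first_root_from (f : R -> R) (a t : R) : Prop :=
  a < t /\ f t = 0 /\ forall y, a <= y < t -> 0 < f y.

Lemma first_root (f : R -> R) (a b : R) :
  (forall x, continuity_pt f x) -> a <= b -> 0 < f a -> f b <= 0 ->
  exists t, first_root_from f a t.
Proof.
  intros Hf Hab Ha Hb.
  pose (E t := a <= t <= b /\ forall y, a <= y <= t -> 0 < f y).
  assert (Ea : E a) by (split; [lra|intros y Hy; replace y with a by lra; exact Ha]).
  destruct (completeness E) as [t [t_ub t_lub]].
  - exists b. intros u Hu. apply Hu.
  - now exists a.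
  - assert (Hat : a <= t) by (apply t_ub, Ea).
    assert (Htb : t <= b) by (apply t_lub; intros u Hu; apply Hu).
    assert (Hpos : forall y, a <= y < t -> 0 < f y).
    { intros y Hy. apply Rnot_le_lt. intros Hfy.
      enough (t <= y) by lra. apply t_lub. intros u [Hu Hfu].
      apply Rnot_lt_le. intros Hyu. specialize (Hfu y ltac:(lra)). lra. }
    assert (Hft : f t = 0).
    { destruct (Rtotal_order (f t) 0) as [Hneg | [Hz | Hgt]]; [exfalso | exact Hz | exfalso].
      - destruct (continuity_pt_pos_near (fun y => - f y) t) as [d [Hd Hnear]].
        + apply continuity_pt_opp, Hf.
        + lra.
        + assert (a < t) by (destruct Hat as [|<-]; lra).
          pose (y := Rmax a (t - d / 2)).
          assert (a <= y < t) by (unfold y; split; [apply Rmax_l|apply Rmax_lub_lt; lra]).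
          assert (t - d / 2 <= y) by apply Rmax_r.
          specialize (Hpos y ltac:(lra)).
          enough (0 < - f y) by lra. apply Hnear. rewrite Rabs_left; lra.
      - destruct (continuity_pt_pos_near f t (Hf t) Hgt) as [d [Hd Hnear]].
        assert (t < b) by (destruct Htb as [| ->]; lra).
        pose (u := Rmin b (t + d / 2)).
        assert (t < u <= b) by (unfold u; split; [apply Rmin_glb_lt; lra|apply Rmin_l]).
        assert (u <= t + d / 2) by apply Rmin_r.
        enough (E u) by (specialize (t_ub u ltac:(assumption)); lra).
        split; [lra|]. intros y Hy. destruct (Rlt_or_le y t); [apply Hpos; lra|].
        apply Hnear. rewrite Rabs_right; lra. }
    exists t. repeat split; auto.
    destruct Hat as [|<-]; lra.
Qed.

Lemma periodic_IZR (f : R -> R) (T : R) :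
  (forall x, f (x + T) = f x) -> forall (m : Z) x, f (x + IZR m * T) = f x.
Proof.
  intros HT m. induction m as [ | m IHm | m IHm] using Z.peano_ind; intros x.
  - f_equal. ring.
  - rewrite succ_IZR, <- (IHm x), <- (HT (x + IZR m * T)). f_equal. ring.
  - replace (x + IZR (Z.pred m) * T) with (x - T + IZR m * T)
      by (unfold Z.pred; rewrite plus_IZR; simpl; ring).
    rewrite IHm, <- (HT (x - T)). f_equal. ring.
Qed.

Lemma gronwall_vanishing (w dw : R -> R) (K x0 : R) :
  (forall x, is_derive w x (dw x)) -> (forall x, 0 <= w x) ->
  (forall x, Rabs (dw x) <= K * w x) -> w x0 = 0 -> forall x, w x = 0.
Proof.
  intros Dw Hw Hdw Hx0 x. apply Rle_antisym; [|apply Hw].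
  destruct (Rle_lt_dec x x0) as [Hx|Hx].
  - assert (Hle : w x * exp (K * (x - x0)) <= w x0 * exp (K * (x0 - x0))).
    { apply (derive_nonneg_le (fun t => w t * exp (K * (t - x0)))
        (fun t => (dw t + K * w t) * exp (K * (t - x0)))); auto.
      - intros t _. auto_derive_from_hyps. unfold Rminus. ring.
      - intros t _. apply Rmult_le_pos; [|apply Rlt_le, exp_pos].
        specialize (Hdw t). apply Rabs_le_between in Hdw. lra. }
    rewrite Hx0, Rmult_0_l in Hle. pose proof (exp_pos (K * (x - x0))). nra.
  - assert (Hle : - w x0 * exp (- K * (x0 - x0)) <= - w x * exp (- K * (x - x0))).
    { apply (derive_nonneg_le (fun t => - w t * exp (- K * (t - x0)))
        (fun t => (K * w t - dw t) * exp (- K * (t - x0)))).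
      - lra.
      - intros t _. auto_derive_from_hyps. unfold Rminus. ring.
      - intros t _. apply Rmult_le_pos; [|apply Rlt_le, exp_pos].
        specialize (Hdw t). apply Rabs_le_between in Hdw. lra. }
    rewrite Hx0 in Hle. pose proof (exp_pos (- K * (x - x0))). nra.
Qed.

Lemma second_order_uniqueness (f : R -> R) (L x0 : R) (y1 v1 y2 v2 : R -> R) :
  0 <= L ->
  (forall x, is_derive y1 x (v1 x)) -> (forall x, is_derive v1 x (f (y1 x))) ->
  (forall x, is_derive y2 x (v2 x)) -> (forall x, is_derive v2 x (f (y2 x))) ->
  (forall x, Rabs (f (y1 x) - f (y2 x)) <= L * Rabs (y1 x - y2 x)) ->
  y1 x0 = y2 x0 -> v1 x0 = v2 x0 ->
  forall x, y1 x = y2 x /\ v1 x = v2 x.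
Proof.
  intros HL Dy1 Dv1 Dy2 Dv2 Hlip Hy0 Hv0.
  pose (w x := (y1 x - y2 x) ^ 2 + (v1 x - v2 x) ^ 2).
  assert (Hw : forall x, w x = 0).
  { apply (gronwall_vanishing w (fun x => 2 * (y1 x - y2 x) * (v1 x - v2 x)
             + 2 * (v1 x - v2 x) * (f (y1 x) - f (y2 x))) (1 + L) x0).
    - intros x. unfold w. auto_derive_from_hyps. ring.
    - intros x. apply Rplus_le_le_0_compat; apply pow2_ge_0.
    - intros x. unfold w. specialize (Hlip x).
      set (d := y1 x - y2 x) in *. set (e := v1 x - v2 x).
      (* |w'| <= 2 |d| |e| + 2 L |d| |e| <= (1 + L) w *)
      assert (Hde : 2 * Rabs d * Rabs e <= d ^ 2 + e ^ 2).
      { rewrite <- (pow2_abs d), <- (pow2_abs e). pose proof (pow2_ge_0 (Rabs d - Rabs e)). lra. }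
      apply Rabs_le. rewrite <- Rabs_le_between.
      eapply Rle_trans; [apply Rabs_triang|].
      rewrite !Rabs_mult, (Rabs_pos_eq 2) by lra.
      pose proof (Rabs_pos d). pose proof (Rabs_pos e). nra.
    - unfold w. rewrite Hy0, Hv0. ring. }
  intros x. specialize (Hw x). unfold w in Hw. rewrite <- !Rsqr_pow2 in Hw.
  apply Rplus_sqr_eq_0 in Hw. split; apply Rminus_diag_uniq; apply Hw.
Qed.

Lemma cube_lipschitz (a u v : R) : 0 <= a -> u ^ 2 <= 1 -> v ^ 2 <= 1 ->
  Rabs (- a * u ^ 3 - - a * v ^ 3) <= 3 * a * Rabs (u - v).
Proof.
  intros Ha Hu Hv.
  assert (HQ : 0 <= u ^ 2 + u * v + v ^ 2)
    by (pose proof (pow2_ge_0 (u + v / 2)); pose proof (pow2_ge_0 v); nra).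
  replace (- a * u ^ 3 - - a * v ^ 3) with (- (a * (u ^ 2 + u * v + v ^ 2)) * (u - v))
    by ring.
  rewrite Rabs_mult, Rabs_Ropp, Rabs_pos_eq by (apply Rmult_le_pos; assumption).
  apply Rmult_le_compat_r; [apply Rabs_pos|].
  assert (u ^ 2 + u * v + v ^ 2 <= 3) by (pose proof (pow2_ge_0 (u - v)); nra).
  nra.
Qed.

Lemma cubic_ode_uniqueness (a x0 : R) (y1 v1 y2 v2 : R -> R) : 0 <= a ->
  (forall x, is_derive y1 x (v1 x)) -> (forall x, is_derive v1 x (- a * y1 x ^ 3)) ->
  (forall x, is_derive y2 x (v2 x)) -> (forall x, is_derive v2 x (- a * y2 x ^ 3)) ->
  (forall x, y1 x ^ 2 <= 1) -> (forall x, y2 x ^ 2 <= 1) ->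
  y1 x0 = y2 x0 -> v1 x0 = v2 x0 -> forall x, y1 x = y2 x /\ v1 x = v2 x.
Proof.
  intros Ha Dy1 Dv1 Dy2 Dv2 B1 B2.
  apply (second_order_uniqueness (fun y => - a * y ^ 3) (3 * a)); auto; [lra|].
  intros x. apply cube_lipschitz; auto.
Qed.

Lemma is_RInt_gen_at_left (f : R -> R) (a b l : R) : a < b ->
  (forall c, a < c < b -> ex_RInt f a c) ->
  filterlim (fun c => RInt f a c) (at_left b) (locally l) ->
  is_RInt_gen f (at_point a) (at_left b) l.
Proof.
  intros Hab Hex Hlim.
  assert (Hnear : at_left b (fun c => a < c < b)).
  { apply (locally_open (fun c => a < c)); [apply open_gt | intros c Hc Hcb; lra | exact Hab]. }
  apply (filterlimi_lim_ext_loc (fun ab => RInt f (fst ab) (snd ab))).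
  - apply (Filter_prod _ _ _ (fun x => x = a) (fun c => a < c < b)); [reflexivity | exact Hnear |].
    intros x c -> Hc. apply (RInt_correct (V := R_CompleteNormedModule)), Hex, Hc.
  - apply (filterlim_ext_loc (fun ab => RInt f a (snd ab))).
    + apply (Filter_prod _ _ _ (fun x => x = a) (fun _ => True)); [reflexivity | apply filter_true |].
      intros x c -> _. reflexivity.
    + apply (filterlim_comp _ _ _ snd (fun c => RInt f a c) _ (at_left b)); [apply filterlim_snd | exact Hlim].
Qed.

Lemma sqrt_denest_plus s : s ^ 2 <= 1 ->
  sqrt (2 - s ^ 2 + 2 * sqrt (1 - s ^ 2)) = 1 + sqrt (1 - s ^ 2).
Proof.
  intros Hs. pose proof (sqrt_sqrt (1 - s ^ 2) ltac:(lra)). pose proof (sqrt_pos (1 - s ^ 2)).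
  apply sqrt_lem_1; nra.
Qed.

Lemma sqrt_denest_minus s : s ^ 2 <= 1 ->
  sqrt (2 - s ^ 2 - 2 * sqrt (1 - s ^ 2)) = 1 - sqrt (1 - s ^ 2).
Proof.
  intros Hs. pose proof (sqrt_sqrt (1 - s ^ 2) ltac:(lra)).
  pose proof (sqrt_pos (1 - s ^ 2)). pose proof (pow2_ge_0 s).
  assert (sqrt (1 - s ^ 2) <= 1) by nra.
  pose proof (pow2_ge_0 (1 - sqrt (1 - s ^ 2))).
  apply sqrt_lem_1; nra.
Qed.

Section HalfSquare.

Variables X s : R.
Hypothesis s_sq : s ^ 2 = 4 * X * (1 - X ^ 2) / (1 + X ^ 2) ^ 2.

Let denom_pos : 0 < 1 + X ^ 2.
Proof. pose proof (pow2_ge_0 X). lra. Qed.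

Lemma half_square_one_plus : 1 + s ^ 2 = ((1 + 2 * X - X ^ 2) / (1 + X ^ 2)) ^ 2.
Proof. rewrite s_sq. field. lra. Qed.

Lemma half_square_one_minus : 1 - s ^ 2 = ((X ^ 2 + 2 * X - 1) / (1 + X ^ 2)) ^ 2.
Proof. rewrite s_sq. field. lra. Qed.

Hypothesis X_range : 0 < X < 1.

Let sqrt_one_plus : sqrt (1 + s ^ 2) = (1 + 2 * X - X ^ 2) / (1 + X ^ 2).
Proof. rewrite half_square_one_plus. apply sqrt_pow2, Rdiv_le_0_compat; nra. Qed.

Let s_sq_le_1 : s ^ 2 <= 1.
Proof. pose proof half_square_one_minus. pose proof (pow2_ge_0 ((X ^ 2 + 2 * X - 1) / (1 + X ^ 2))). lra. Qed.

Lemma half_square_plus_branch : 0 <= X ^ 2 + 2 * X - 1 ->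
  X = (-1 - sqrt (1 - s ^ 2)) / s ^ 2
      + sqrt (1 + s ^ 2) / s ^ 2 * sqrt (2 - s ^ 2 + 2 * sqrt (1 - s ^ 2)).
Proof.
  intros Hsign.
  rewrite sqrt_denest_plus by exact s_sq_le_1.
  rewrite sqrt_one_plus, half_square_one_minus.
  rewrite sqrt_pow2 by (apply Rdiv_le_0_compat; lra).
  rewrite s_sq. field. repeat split; apply Rgt_not_eq; nra.
Qed.

Lemma half_square_minus_branch : X ^ 2 + 2 * X - 1 <= 0 ->
  X = (-1 + sqrt (1 - s ^ 2)) / s ^ 2
      + sqrt (1 + s ^ 2) / s ^ 2 * sqrt (2 - s ^ 2 - 2 * sqrt (1 - s ^ 2)).
Proof.
  intros Hsign.
  rewrite sqrt_denest_minus by exact s_sq_le_1.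
  rewrite sqrt_one_plus, half_square_one_minus.
  replace (((X ^ 2 + 2 * X - 1) / (1 + X ^ 2)) ^ 2)
    with (((1 - 2 * X - X ^ 2) / (1 + X ^ 2)) ^ 2) by (field; lra).
  rewrite sqrt_pow2 by (apply Rdiv_le_0_compat; lra).
  rewrite s_sq. field. repeat split; apply Rgt_not_eq; nra.
Qed.

End HalfSquare.

Record leaf2_system (r p : R -> R) : Prop := {
  leaf2_r_deriv : forall x, is_derive r x (p x);
  leaf2_p_deriv : forall x, is_derive p x (-2 * r x ^ 3);
  leaf2_r_0 : r 0 = 0;
  leaf2_p_0 : p 0 = 1 }.

Lemma is_sleaf2_leaf2_system (r : R -> R) : is_sleaf 2 r -> exists p, leaf2_system r p.
Proof.
  intros [p [Dr [Dp [r_0 p_0]]]]. exists p.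
  (* [- INR 2 * r x ^ (2 * 2 - 1)] is convertible to [-2 * r x ^ 3] *)
  split; [exact Dr | exact Dp | exact r_0 | exact p_0].
Qed.

Definition leaf2_integrand (t : R) : R := / sqrt (1 - t ^ 4).

Lemma leaf2_integrand_continuous t : -1 < t < 1 -> continuous leaf2_integrand t.
Proof.
  intros Ht. apply (ex_derive_continuous (K := R_AbsRing) (V := R_NormedModule)).
  assert (0 < 1 - t ^ 4) by (pose proof (pow2_ge_0 t); assert (t ^ 2 < 1) by nra; nra).
  unfold leaf2_integrand. auto_derive. split; [lra|]. split; [|auto].
  apply Rgt_not_eq, sqrt_lt_R0. lra.
Qed.

Section Leaf2.

Variables r p : R -> R.
Hypothesis sol : leaf2_system r p.

Let Dr := leaf2_r_deriv r p sol.
Let Dp := leaf2_p_deriv r p sol.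
Let r_0 := leaf2_r_0 r p sol.
Let p_0 := leaf2_p_0 r p sol.

Lemma leaf2_energy x : p x ^ 2 + r x ^ 4 = 1.
Proof.
  pose (E t := p t ^ 2 + r t ^ 4).
  assert (DE : forall t, is_derive E t 0) by (intros t; unfold E; auto_derive_from_hyps; ring).
  change (E x = 1). replace 1 with (E 0) by (unfold E; rewrite r_0, p_0; ring).
  destruct (Rtotal_order x 0) as [Hx | [-> | Hx]]; [| reflexivity |].
  - apply eq_is_derive; auto.
  - symmetry. apply eq_is_derive; auto.
Qed.

Lemma leaf2_r_sq_le_1 x : r x ^ 2 <= 1.
Proof.
  pose proof (leaf2_energy x). pose proof (pow2_ge_0 (p x)). pose proof (pow2_ge_0 (r x)).
  nra.
Qed.

Lemma leaf2_odd x : r (- x) = - r x /\ p (- x) = p x.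
Proof.
  destruct (cubic_ode_uniqueness 2 0 (fun t => - r (- t)) (fun t => p (- t)) r p)
    with (x := x) as [Hr Hp]; auto; try lra.
  - intros t. auto_derive_from_hyps. ring.
  - intros t. auto_derive_from_hyps. ring.
  - intros t. replace ((- r (- t)) ^ 2) with (r (- t) ^ 2) by ring.
    apply leaf2_r_sq_le_1.
  - exact leaf2_r_sq_le_1.
  - rewrite Ropp_0, r_0. ring.
  - rewrite Ropp_0. reflexivity.
Qed.

Lemma leaf2_denom_pos x : 0 < 1 + r x ^ 4.
Proof. pose proof (pow2_ge_0 (r x ^ 2)). nra. Qed.

Lemma leaf2_double x :
  r (2 * x) = 2 * r x * p x / (1 + r x ^ 4) /\
  p (2 * x) = (1 - 6 * r x ^ 4 + r x ^ 8) / (1 + r x ^ 4) ^ 2.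
Proof.
  assert (HD : forall t, 1 + r t ^ 4 <> 0)
    by (intros t; apply Rgt_not_eq, leaf2_denom_pos).
  destruct (cubic_ode_uniqueness 8 0 (fun t => r (2 * t)) (fun t => 2 * p (2 * t))
    (fun t => 2 * r t * p t / (1 + r t ^ 4))
    (fun t => 2 * (1 - 6 * r t ^ 4 + r t ^ 8) / (1 + r t ^ 4) ^ 2))
    with (x := x) as [Hr Hp]; try lra.
  - intros t. auto_derive_from_hyps. ring.
  - intros t. auto_derive_from_hyps. ring.
  - intros t. auto_derive_from_hyps; [apply HD |].
    apply Rminus_diag_uniq.
    transitivity ((p t ^ 2 + r t ^ 4 - 1) * (2 - 6 * r t ^ 4) / (1 + r t ^ 4) ^ 2).
    + field. apply HD.
    + rewrite leaf2_energy. unfold Rdiv. ring.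
  - intros t. auto_derive_from_hyps; [exact (pow_nonzero _ 2 (HD t)) |].
    apply Rminus_diag_uniq.
    transitivity ((p t ^ 2 + r t ^ 4 - 1) * 64 * r t ^ 3 * p t / (1 + r t ^ 4) ^ 3).
    + field. apply HD.
    + rewrite leaf2_energy. unfold Rdiv. ring.
  - intros t. apply leaf2_r_sq_le_1.
  - intros t.
    replace ((2 * r t * p t / (1 + r t ^ 4)) ^ 2)
      with (1 - ((1 - 2 * r t ^ 2 - r t ^ 4) / (1 + r t ^ 4)) ^ 2).
    + pose proof (pow2_ge_0 ((1 - 2 * r t ^ 2 - r t ^ 4) / (1 + r t ^ 4))). lra.
    + replace ((2 * r t * p t / (1 + r t ^ 4)) ^ 2)
        with (4 * r t ^ 2 * p t ^ 2 / (1 + r t ^ 4) ^ 2) by (field; apply HD).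
      replace (p t ^ 2) with (1 - r t ^ 4) by (pose proof (leaf2_energy t); lra).
      field. apply HD.
  - rewrite Rmult_0_r, r_0, p_0. field.
  - rewrite Rmult_0_r, r_0, p_0. field.
Qed.

Lemma leaf2_double_sq x :
  r (2 * x) ^ 2 = 4 * r x ^ 2 * (1 - (r x ^ 2) ^ 2) / (1 + (r x ^ 2) ^ 2) ^ 2.
Proof.
  replace ((r x ^ 2) ^ 2) with (r x ^ 4) by ring.
  destruct (leaf2_double x) as [-> _].
  replace (1 - r x ^ 4) with (p x ^ 2) by (pose proof (leaf2_energy x); lra).
  field. apply Rgt_not_eq, leaf2_denom_pos.
Qed.

Lemma leaf2_double_p_factor x :
  p (2 * x) * (1 + (r x ^ 2) ^ 2) ^ 2
  = ((r x ^ 2) ^ 2 + 2 * r x ^ 2 - 1) * ((r x ^ 2) ^ 2 - 2 * r x ^ 2 - 1).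
Proof.
  replace ((r x ^ 2) ^ 2) with (r x ^ 4) by ring.
  destruct (leaf2_double x) as [_ ->].
  field. apply Rgt_not_eq, leaf2_denom_pos.
Qed.

Let second_factor_neg x : (r x ^ 2) ^ 2 - 2 * r x ^ 2 - 1 < 0.
Proof. pose proof (leaf2_r_sq_le_1 x). pose proof (pow2_ge_0 (r x)). nra. Qed.

Lemma leaf2_double_p_nonpos x : p (2 * x) <= 0 -> 0 <= (r x ^ 2) ^ 2 + 2 * r x ^ 2 - 1.
Proof.
  intros Hp. pose proof (leaf2_double_p_factor x). pose proof (second_factor_neg x).
  pose proof (pow2_ge_0 (1 + (r x ^ 2) ^ 2)). nra.
Qed.

Lemma leaf2_double_p_nonneg x : 0 <= p (2 * x) -> (r x ^ 2) ^ 2 + 2 * r x ^ 2 - 1 <= 0.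
Proof.
  intros Hp. pose proof (leaf2_double_p_factor x). pose proof (second_factor_neg x).
  pose proof (pow2_ge_0 (1 + (r x ^ 2) ^ 2)). nra.
Qed.

Lemma leaf2_half_sq_bounds x : r (2 * x) <> 0 -> 0 < r x ^ 2 < 1.
Proof.
  intros Hne. destruct (leaf2_double x) as [Hr _].
  assert (r x <> 0 /\ p x <> 0) as [Hr0 Hp0]
    by (split; intros H0; apply Hne; rewrite Hr, H0; unfold Rdiv; ring).
  pose proof (leaf2_energy x). pose proof (pow2_gt_0 _ Hr0). pose proof (pow2_gt_0 _ Hp0).
  split; [lra | nra].
Qed.

Lemma leaf2_p_nonpos_somewhere : exists x, 0 < x /\ p x <= 0.
Proof.
  apply NNPP. intros Hno.
  assert (Hpos : forall x, 0 < x -> 0 < p x)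
    by (intros x Hx; apply Rnot_le_lt; intros Hp; apply Hno; exists x; auto).
  assert (Hrho : 0 < r 1).
  { rewrite <- r_0. apply (derive_pos_lt r p); [lra | intros; apply Dr | intros; apply Hpos; lra]. }
  set (rho := r 1) in *.
  assert (Hrho3 : 0 < rho ^ 3) by (apply pow_lt; lra).
  pose (x := 1 + 1 / rho ^ 3).
  assert (Hx : 1 < x) by (unfold x; assert (0 < 1 / rho ^ 3) by (apply Rdiv_lt_0_compat; lra); lra).
  (* after time 1, [r >= rho] makes [p] decrease at rate at least [2 rho^3] *)
  assert (Hdecay : - p 1 - 2 * rho ^ 3 * 1 <= - p x - 2 * rho ^ 3 * x).
  { apply (derive_nonneg_le (fun t => - p t - 2 * rho ^ 3 * t)
      (fun t => 2 * r t ^ 3 - 2 * rho ^ 3)); [lra | |].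
    - intros t _. auto_derive_from_hyps. ring.
    - intros t Ht. enough (rho ^ 3 <= r t ^ 3) by lra. apply pow_incr. split; [lra|].
      apply (derive_nonneg_le r p); [lra | intros; apply Dr | intros; apply Rlt_le, Hpos; lra]. }
  assert (Hp1 : p 1 <= 1) by (pose proof (leaf2_energy 1); pose proof (pow2_ge_0 (r 1 ^ 2)); nra).
  assert (2 * rho ^ 3 * (x - 1) = 2) by (unfold x; field; lra).
  specialize (Hpos x ltac:(lra)). lra.
Qed.

Lemma leaf2_p_first_zero : exists t0, first_root_from p 0 t0.
Proof.
  destruct leaf2_p_nonpos_somewhere as [x1 [Hx1 Hpx1]].
  apply (first_root p 0 x1); [| lra | rewrite p_0; lra | exact Hpx1].
  intros x. apply (is_derive_continuity_pt _ _ _ (Dp x)).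
Qed.

Section QuarterPeriod.

Variable t0 : R.
Hypothesis t0_first_zero : first_root_from p 0 t0.

Let t0_pos : 0 < t0 := proj1 t0_first_zero.
Let p_t0 : p t0 = 0 := proj1 (proj2 t0_first_zero).
Let p_pos : forall y, 0 <= y < t0 -> 0 < p y := proj2 (proj2 t0_first_zero).

Lemma leaf2_r_increasing a b : 0 <= a < b -> b <= t0 -> r a < r b.
Proof.
  intros Hab Hb. apply (derive_pos_lt r p); [lra | intros; apply Dr | intros; apply p_pos; lra].
Qed.

Lemma leaf2_r_t0 : r t0 = 1.
Proof.
  pose proof (leaf2_energy t0) as E. rewrite p_t0 in E.
  assert (Hr : 0 < r t0) by (rewrite <- r_0; apply leaf2_r_increasing; lra).
  assert (Hfac : (r t0 - 1) * ((r t0 + 1) * (r t0 ^ 2 + 1)) = 0) by (ring_simplify; lra).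
  apply Rmult_integral in Hfac as [Hfac | Hfac]; [lra|].
  pose proof (pow2_ge_0 (r t0)). nra.
Qed.

Lemma leaf2_reflect x : r (2 * t0 - x) = r x /\ p (2 * t0 - x) = - p x.
Proof.
  destruct (cubic_ode_uniqueness 2 t0 (fun t => r (2 * t0 - t)) (fun t => - p (2 * t0 - t)) r p)
    with (x := x) as [Hr Hp]; auto; try lra.
  - intros t. auto_derive_from_hyps. unfold Rminus. ring.
  - intros t. auto_derive_from_hyps. unfold Rminus. ring.
  - intros t. apply leaf2_r_sq_le_1.
  - exact leaf2_r_sq_le_1.
  - f_equal. ring.
  - replace (2 * t0 - t0) with t0 by ring. rewrite p_t0. ring.
Qed.

Lemma leaf2_p_antiperiodic x : p (x + 2 * t0) = - p x.
Proof.
  destruct (leaf2_reflect (- x)) as [_ Hp].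
  replace (2 * t0 - - x) with (x + 2 * t0) in Hp by ring.
  rewrite Hp. f_equal. apply leaf2_odd.
Qed.

Lemma leaf2_p_nonneg_quarter x : - t0 <= x <= t0 -> 0 <= p x.
Proof.
  assert (Hhalf : forall y, 0 <= y <= t0 -> 0 <= p y).
  { intros y Hy. destruct (Rlt_or_le y t0); [apply Rlt_le, p_pos; lra|].
    replace y with t0 by lra. lra. }
  intros Hx. destruct (Rle_or_lt 0 x); [apply Hhalf; lra|].
  rewrite <- (proj2 (leaf2_odd x)). apply Hhalf. lra.
Qed.

Lemma leaf2_p_periodic x : p (x + 4 * t0) = p x.
Proof.
  replace (x + 4 * t0) with (x + 2 * t0 + 2 * t0) by ring.
  rewrite !leaf2_p_antiperiodic. ring.
Qed.

Lemma leaf2_p_nonpos_on (m : Z) l :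
  t0 * (4 * IZR m + 1) <= l <= t0 * (4 * IZR m + 3) -> p l <= 0.
Proof.
  intros Hl. pose (x := l - 2 * t0 - IZR m * (4 * t0)).
  replace l with (x + 2 * t0 + IZR m * (4 * t0)) by (unfold x; ring).
  rewrite (periodic_IZR p (4 * t0) leaf2_p_periodic), leaf2_p_antiperiodic.
  enough (0 <= p x) by lra. apply leaf2_p_nonneg_quarter. unfold x. lra.
Qed.

Lemma leaf2_p_nonneg_on (m : Z) l :
  t0 * (4 * IZR m - 1) <= l <= t0 * (4 * IZR m + 1) -> 0 <= p l.
Proof.
  intros Hl. pose (x := l - IZR m * (4 * t0)).
  replace l with (x + IZR m * (4 * t0)) by (unfold x; ring).
  rewrite (periodic_IZR p (4 * t0) leaf2_p_periodic).
  apply leaf2_p_nonneg_quarter. unfold x. lra.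
Qed.

Lemma leaf2_r_range b : 0 <= b < t0 -> 0 <= r b < 1.
Proof.
  intros Hb. split.
  - destruct (Req_dec b 0) as [-> | Hb0]; [lra|].
    rewrite <- r_0. apply Rlt_le, leaf2_r_increasing; lra.
  - rewrite <- leaf2_r_t0. apply leaf2_r_increasing; lra.
Qed.

(* Substitute [t = r y], [dt = p y dy]; on [0, t0) we have [sqrt (1 - r y ^ 4) = p y]. *)
Lemma leaf2_RInt_r b : 0 <= b < t0 -> RInt leaf2_integrand 0 (r b) = b.
Proof.
  intros Hb.
  rewrite <- r_0 at 1.
  rewrite <- (RInt_comp leaf2_integrand r p 0 b).
  - rewrite (RInt_ext _ (fun _ => 1)).
    + rewrite RInt_const. change ((b - 0) * 1 = b). ring.
    + intros y Hy. rewrite Rmin_left, Rmax_right in Hy by lra.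
      specialize (p_pos y ltac:(lra)).
      unfold leaf2_integrand. replace (1 - r y ^ 4) with (p y ^ 2)
        by (pose proof (leaf2_energy y); lra).
      rewrite sqrt_pow2 by lra. change (p y * / p y = 1). field. lra.
  - intros y Hy. rewrite Rmin_left, Rmax_right in Hy by lra.
    apply leaf2_integrand_continuous. pose proof (leaf2_r_range y ltac:(lra)). lra.
  - intros y _. split; [apply Dr|].
    apply continuity_pt_filterlim, (is_derive_continuity_pt _ _ _ (Dp y)).
Qed.

Lemma leaf2_RInt_at_left_1 :
  filterlim (fun c => RInt leaf2_integrand 0 c) (at_left 1) (locally t0).
Proof.
  apply filterlim_locally. intros eps.
  pose (b0 := Rmax 0 (t0 - eps / 2)).
  assert (Hb0 : 0 <= b0 < t0)
    by (split; [apply Rmax_l | apply Rmax_lub_lt; destruct eps; simpl; lra]).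
  assert (t0 - eps / 2 <= b0) by apply Rmax_r.
  pose proof (leaf2_r_range b0 Hb0).
  apply (locally_open (fun c => r b0 < c)); [apply open_gt | | lra].
  intros c Hc Hc1.
  destruct (IVT_gen r b0 t0 c) as [b [Hb Hrb]].
  - intros x. apply (is_derive_continuity_pt _ _ _ (Dr x)).
  - rewrite leaf2_r_t0, Rmin_left, Rmax_right; lra.
  - rewrite Rmin_left, Rmax_right in Hb by lra.
    assert (b <> t0) by (intros ->; rewrite leaf2_r_t0 in Hrb; lra).
    rewrite <- Hrb, leaf2_RInt_r by lra.
    change (Rabs (b - t0) < eps). apply Rabs_def1; lra.
Qed.

Lemma leaf2_pi_n : pi_n 2 = 2 * t0.
Proof.
  unfold pi_n. change (fun t : R => / sqrt (1 - t ^ (2 * 2))) with leaf2_integrand.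
  rewrite (is_RInt_gen_unique leaf2_integrand t0); [reflexivity|].
  apply is_RInt_gen_at_left; [lra | | exact leaf2_RInt_at_left_1].
  intros c Hc. apply (ex_RInt_continuous (V := R_CompleteNormedModule)).
  intros z Hz. rewrite Rmin_left, Rmax_right in Hz by lra.
  apply leaf2_integrand_continuous. lra.
Qed.

End QuarterPeriod.

End Leaf2.

Theorem mainTheorem12 :
  forall (sleaf2 : R -> R), is_sleaf 2 sleaf2 ->
  forall (m : Z) (l : R), sleaf2 l <> 0 ->
  let s := sleaf2 l in
  (pi_n 2 / 2 * (4 * IZR m + 1) <= l <= pi_n 2 / 2 * (4 * IZR m + 3) ->
     (sleaf2 (l / 2)) ^ 2 =
       (-1 - sqrt (1 - s ^ 2)) / s ^ 2
       + sqrt (1 + s ^ 2) / s ^ 2 * sqrt (2 - s ^ 2 + 2 * sqrt (1 - s ^ 2))) /\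
  (pi_n 2 / 2 * (4 * IZR m - 1) <= l <= pi_n 2 / 2 * (4 * IZR m + 1) ->
     (sleaf2 (l / 2)) ^ 2 =
       (-1 + sqrt (1 - s ^ 2)) / s ^ 2
       + sqrt (1 + s ^ 2) / s ^ 2 * sqrt (2 - s ^ 2 - 2 * sqrt (1 - s ^ 2))).
Proof.
  intros sleaf2 Hsleaf m l Hl s. subst s.
  destruct (is_sleaf2_leaf2_system sleaf2 Hsleaf) as [p sol].
  destruct (leaf2_p_first_zero sleaf2 p sol) as [t0 Ht0].
  replace (pi_n 2 / 2) with t0 by (rewrite (leaf2_pi_n sleaf2 p sol t0 Ht0); field).
  assert (Hl2 : 2 * (l / 2) = l) by field.
  pose proof (leaf2_double_sq sleaf2 p sol (l / 2)) as Hs. rewrite Hl2 in Hs.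
  pose proof (leaf2_half_sq_bounds sleaf2 p sol (l / 2)) as HX. rewrite Hl2 in HX.
  specialize (HX Hl).
  split; intros Hrange.
  - apply (half_square_plus_branch _ _ Hs HX), (leaf2_double_p_nonpos sleaf2 p sol).
    rewrite Hl2. exact (leaf2_p_nonpos_on sleaf2 p sol t0 Ht0 m l Hrange).
  - apply (half_square_minus_branch _ _ Hs HX), (leaf2_double_p_nonneg sleaf2 p sol).
    rewrite Hl2. exact (leaf2_p_nonneg_on sleaf2 p sol t0 Ht0 m l Hrange).
Qed.
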